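(* Let $k\geq 1$. If $R$ is a $k$-clean ring (associative with identity), then the matrix ring $M_n(R)$ is $k$-clean for every positive integer $n$.
   Context: For a positive integer $k$, a ring $S$ is $k$-clean if every element of $S$ can be written as $e+u_1+\cdots+u_k$ with $e=e^2\in S$ and $u_1,\dots,u_k$ units of $S$. *)

From mathcomp Require Import all_boot all_algebra.
Set Implicit Arguments. Unset Strict Implicit. Unset Printing Implicit Defensive.
Import GRing.Theory.
Local Open Scope ring_scope.

Definition is_unit (S : pzRingType) (u : S) : Prop :=
  exists v : S, u * v = 1 /\ v * u = 1.

Definition k_clean (k : nat) (S : pzRingType) : Prop :=
  forall x : S, exists (e : S) (u : 'I_k -> S),
    e * e = e /\ (forall i, is_unit (u i)) /\ x = e + \sum_(i < k) u i.

From mathcomp Require Import all_boot all_algebra.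
Set Implicit Arguments. Unset Strict Implicit. Unset Printing Implicit Defensive.
Import GRing.Theory.
Local Open Scope ring_scope.

(* M_1 is a copy of R, and M_(n+2) is the ring of block matrices over M_1 and
   M_(n+1), so it suffices that block matrices over k-clean corners are k-clean.
   Split x = [[a, b], [c, d]], write a = f + u_1 + ... + u_k, let w be an inverse
   of u_1, and write the Schur complement d - c w b = g + v_1 + ... + v_k.  Then
   x = diag(f, g) + [[u_1, b], [c, v_1 + c w b]] + sum_{i > 1} diag(u_i, v_i),
   and the second summand is a unit because it factors as
   [[1, 0], [c w, 1]] * diag(u_1, v_1) * [[1, w b], [0, 1]]. *)

Lemma is_unitM (S : pzRingType) (a b : S) :
  is_unit a -> is_unit b -> is_unit (a * b).
Proof.
move=> [a' [aa' a'a]] [b' [bb' b'b]]; exists (b' * a'); split.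
  by rewrite mulrA -(mulrA a) bb' mulr1 aa'.
by rewrite mulrA -(mulrA b') a'a mulr1 b'b.
Qed.

Lemma k_clean_rmorph_surj k (S T : pzRingType) (f : {rmorphism S -> T}) :
  (forall y, exists x, f x = y) -> k_clean k S -> k_clean k T.
Proof.
move=> f_surj cleanS y; have [x <-] := f_surj y.
have [e [u [ee [u_unit ->]]]] := cleanS x.
exists (f e), (fun i => f (u i)); split; [|split].
- by rewrite -rmorphM ee.
- move=> i; have [w [uw wu]] := u_unit i.
  by exists (f w); rewrite -!rmorphM ?uw ?wu rmorph1.
- by rewrite rmorphD rmorph_sum.
Qed.

Lemma k_clean_mx1 k (R : pzRingType) : k_clean k R -> k_clean k 'M[R]_1.
Proof.
apply: (@k_clean_rmorph_surj k R _ (@scalar_mx R 1)) => A.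
by exists (A 0 0); rewrite [RHS]mx11_scalar.
Qed.

Section BlockMatrices.
Variables (R : pzRingType) (m p : nat).

Lemma is_unit_mxP n (A : 'M[R]_n) :
  is_unit A <-> exists B, A *m B = 1%:M /\ B *m A = 1%:M.
Proof. by rewrite /is_unit -mulmxE idmxE. Qed.

Lemma is_unit_block_lower (c : 'M[R]_(p, m)) :
  is_unit (block_mx 1%:M 0 c 1%:M : 'M_(m + p)).
Proof.
apply/is_unit_mxP; exists (block_mx 1%:M 0 (- c) 1%:M); split;
  rewrite mulmx_block !mulmx0 !mul0mx !mul1mx !mulmx1 !addr0 !add0r ?subrr ?addNr;
  by rewrite [RHS]scalar_mx_block.
Qed.

Lemma is_unit_block_upper (b : 'M[R]_(m, p)) :
  is_unit (block_mx 1%:M b 0 1%:M : 'M_(m + p)).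
Proof.
apply/is_unit_mxP; exists (block_mx 1%:M (- b) 0 1%:M); split;
  rewrite mulmx_block !mulmx0 !mul0mx !mul1mx !mulmx1 !addr0 !add0r ?subrr ?addNr;
  by rewrite [RHS]scalar_mx_block.
Qed.

Lemma is_unit_block_diag (u : 'M[R]_m) (v : 'M[R]_p) :
  is_unit u -> is_unit v -> is_unit (block_mx u 0 0 v).
Proof.
move=> /is_unit_mxP[u' [uu' u'u]] /is_unit_mxP[v' [vv' v'v]].
apply/is_unit_mxP; exists (block_mx u' 0 0 v'); split;
  rewrite mulmx_block !mulmx0 !mul0mx !addr0 !add0r ?uu' ?u'u ?vv' ?v'v;
  by rewrite [RHS]scalar_mx_block.
Qed.

Lemma is_unit_block_schur (u w : 'M[R]_m) (v : 'M[R]_p) b c :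
  u *m w = 1%:M -> w *m u = 1%:M -> is_unit v ->
  is_unit (block_mx u b c (v + c *m w *m b)).
Proof.
move=> uw wu v_unit.
have -> : block_mx u b c (v + c *m w *m b) =
    block_mx 1%:M 0 (c *m w) 1%:M * block_mx u 0 0 v * block_mx 1%:M (w *m b) 0 1%:M.
  rewrite -!mulmxE !mulmx_block !mulmx0 !mul0mx !mulmx1 !mul1mx !addr0 !add0r.
  by rewrite mulmxA uw mul1mx -(mulmxA c w u) wu mulmx1 addrC mulmxA.
apply: is_unitM; [apply: is_unitM|].
- exact: is_unit_block_lower.
- by apply: is_unit_block_diag => //; apply/is_unit_mxP; exists w.
- exact: is_unit_block_upper.
Qed.

Lemma block_diag_mx_idem (f : 'M[R]_m) (g : 'M[R]_p) :
  f * f = f -> g * g = g -> block_mx f 0 0 g * block_mx f 0 0 g = block_mx f 0 0 g.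
Proof.
rewrite -!mulmxE => ff gg.
by rewrite mulmx_block !mulmx0 !mul0mx !addr0 !add0r ff gg.
Qed.

Lemma block_mx_sum I (r : seq I) (A : I -> 'M[R]_m) (B : I -> 'M[R]_(m, p))
    (C : I -> 'M[R]_(p, m)) (D : I -> 'M[R]_p) :
  \sum_(i <- r) block_mx (A i) (B i) (C i) (D i) =
  block_mx (\sum_(i <- r) A i) (\sum_(i <- r) B i)
           (\sum_(i <- r) C i) (\sum_(i <- r) D i).
Proof.
elim: r => [|i r IHr]; first by rewrite !big_nil block_mx0.
by rewrite !big_cons IHr add_block_mx.
Qed.

Lemma k_clean_block_mx k : (0 < k)%N ->
  k_clean k 'M[R]_m -> k_clean k 'M[R]_p -> k_clean k 'M[R]_(m + p).
Proof.
move=> k_gt0 clean_m clean_p x; pose i0 := Ordinal k_gt0.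
rewrite -(submxK x); set a := ulsubmx x; set b := ursubmx x.
set c := dlsubmx x; set d := drsubmx x.
have [f [u [ff [u_unit a_eq]]]] := clean_m a.
have /is_unit_mxP[w [uw wu]] := u_unit i0.
have [g [v [gg [v_unit schur_eq]]]] := clean_p (d - c *m w *m b).
pose corr i : 'M_(m + p) :=
  if i == i0 then block_mx 0 b c (c *m w *m b) else 0.
exists (block_mx f 0 0 g), (fun i => block_mx (u i) 0 0 (v i) + corr i).
split; [exact: block_diag_mx_idem | split].
- move=> i; rewrite /corr; case: eqP => [-> | _].
    rewrite add_block_mx !addr0 !add0r.
    exact: is_unit_block_schur.
  by rewrite addr0; apply: is_unit_block_diag.
- rewrite big_split /= /corr -big_mkcond big_pred1_eq block_mx_sum !big1_eq.
  by rewrite !add_block_mx !addr0 !add0r -a_eq addrA -schur_eq subrK.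
Qed.

End BlockMatrices.

Theorem corollary6 (k : nat) (R : pzRingType) :
  (1 <= k)%N -> k_clean k R -> forall n : nat, k_clean k 'M[R]_n.+1.
Proof.
move=> k_gt0 cleanR; elim=> [|n IHn]; first exact: k_clean_mx1.
exact: (k_clean_block_mx k_gt0 (k_clean_mx1 cleanR) IHn).
Qed.
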